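(* Let $D$ be a unique factorization domain and let $m$ be a nonzero element of $D$. Then $\tau_m=P_{J(m)}$, and consequently $\tau_m$ is a congruence on $D_{mult}$ such that the factor semigroup $D_{mult}/\tau_m$ satisfies Condition $( * )$.
   Context: $D_{mult}$ denotes the multiplicative semigroup of $D$; $e$ is the identity of $D$. For $a,b\in D$, $a\sim b$ means $a$ and $b$ are associates. $J(m)=mD$ is the ideal of $D$ generated by $m$ (it is also an ideal of $D_{mult}$). For $m\in D$, $\tau_m$ is the relation on $D$ given by $(a,b)\in\tau_m$ iff $\gcd(a,m)\sim\gcd(b,m)$. For a semigroup $S$, $H\subseteq S$ and $a\in S$, let $H\dots a=\{(x,y)\in S\times S: xay\in H\}$, and $P_H=\{(a,b)\in S\times S: H\dots a=H\dots b\}$ (the principal congruence defined by $H$); here $P_{J(m)}$ is computed in $S=D_{mult}$. For a commutative semigroup $S$ with zero $0$, $A(s)=\{x\in S: xs=0\}$. A semigroup $S$ satisfies Condition $( * )$ if: (1) $S$ is a commutative monoid with a zero; (2) $A(s)\neq\{0\}$ for every non-identity $s\in S$; (3) $A(s)=A(t)$ implies $s=t$ for all $s,t\in S$. *)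

From Stdlib Require Import ClassicalEpsilon.
From HB Require Import structures.
From mathcomp Require Import all_boot all_order all_algebra.
Set Implicit Arguments. Unset Strict Implicit. Unset Printing Implicit Defensive.
Import GRing.Theory.
Local Open Scope ring_scope.

Definition rdvd (D : idomainType) (a b : D) : Prop := exists c : D, b = c * a.

Definition assoc (D : idomainType) (a b : D) : Prop := rdvd a b /\ rdvd b a.

Definition irreducible_el (D : idomainType) (p : D) : Prop :=
  p != 0 /\ p \isn't a GRing.unit /\
  (forall a b : D, p = a * b -> a \is a GRing.unit \/ b \is a GRing.unit).

Definition is_UFD (D : idomainType) : Prop :=
  (forall a : D, a != 0 -> a \isn't a GRing.unit ->
     exists s : seq D, (forall x, x \in s -> irreducible_el x) /\
                       a = \prod_(x <- s) x) /\
  (forall s t : seq D,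
     (forall x, x \in s -> irreducible_el x) ->
     (forall x, x \in t -> irreducible_el x) ->
     \prod_(x <- s) x = \prod_(x <- t) x ->
     exists f : 'I_(size s) -> 'I_(size t),
       bijective f /\ forall i : 'I_(size s), assoc (nth 0 s i) (nth 0 t (f i))).

Definition is_gcd (D : idomainType) (g a b : D) : Prop :=
  rdvd g a /\ rdvd g b /\ (forall d, rdvd d a -> rdvd d b -> rdvd d g).

Definition tau (D : idomainType) (m : D) (a b : D) : Prop :=
  forall g1 g2 : D, is_gcd g1 a m -> is_gcd g2 b m -> assoc g1 g2.

Definition J (D : idomainType) (m : D) : D -> Prop := fun z => exists c, z = m * c.

Definition PH (S : Type) (mul : S -> S -> S) (H : S -> Prop) (a b : S) : Prop :=
  forall x y : S, H (mul (mul x a) y) <-> H (mul (mul x b) y).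

Definition is_congruence (S : Type) (R : S -> S -> Prop) (mul : S -> S -> S) : Prop :=
  (forall a, R a a) /\ (forall a b, R a b -> R b a) /\
  (forall a b c, R a b -> R b c -> R a c) /\
  (forall a b c, R a b -> R (mul c a) (mul c b) /\ R (mul a c) (mul b c)).

Definition qtype (S : Type) (R : S -> S -> Prop) : Type :=
  {C : S -> Prop | exists a, C = R a}.
Definition qclass (S : Type) (R : S -> S -> Prop) (a : S) : qtype R :=
  exist _ (R a) (ex_intro _ a erefl).
Definition qrep (S : Type) (R : S -> S -> Prop) (C : qtype R) : S :=
  proj1_sig (constructive_indefinite_description _ (proj2_sig C)).
Definition qop (S : Type) (R : S -> S -> Prop) (mul : S -> S -> S)
  (C1 C2 : qtype R) : qtype R := qclass R (mul (qrep C1) (qrep C2)).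

Definition annih (S : Type) (mul : S -> S -> S) (z s : S) : S -> Prop :=
  fun x => mul x s = z.
Definition cond_star (S : Type) (mul : S -> S -> S) : Prop :=
  exists e z : S,
    ((forall x y w, mul x (mul y w) = mul (mul x y) w) /\
     (forall x y, mul x y = mul y x) /\
     (forall x, mul e x = x /\ mul x e = x) /\
     (forall x, mul z x = z /\ mul x z = z)) /\
    (forall s, s <> e -> ~ (forall x, annih mul z s x <-> x = z)) /\
    (forall s t, (forall x, annih mul z s x <-> annih mul z t x) -> s = t).
Arguments qop {S} R mul.
Arguments qclass {S} R a.

(* In a UFD the gcd g of a and m satisfies: m | c a iff m | c g (induction on
   a factorization of m, using that irreducibles are prime).  Hence
   gcd(a,m) ~ gcd(b,m) iff a and b have the same annihilator modulo m, i.e.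
   (a, b) is in the principal congruence of the ideal mD.  For any ideal H of
   a commutative monoid with zero, the annihilator of the class [a] in the
   quotient by P_H consists of the classes [c] with c a in H, and [c] is zero
   iff c is in H; both parts of Condition ( * ) follow directly. *)

From mathcomp Require Import all_boot all_order all_algebra.
From mathcomp Require Import ring.
From Stdlib Require Import Classical ClassicalEpsilon ProofIrrelevance.
From Stdlib Require Import FunctionalExtensionality PropExtensionality.
Set Implicit Arguments. Unset Strict Implicit.
Import GRing.Theory.
Local Open Scope ring_scope.

Section PrincipalCongruence.
Variables (S : Type) (mul : S -> S -> S).
Hypothesis mulA : associative mul.

Lemma PH_congruence (H : S -> Prop) : is_congruence (PH mul H) mul.
Proof.
split; first by [].
split; first by move=> a b hab x y; rewrite hab.
split; first by move=> a b c hab hbc x y; rewrite hab hbc.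
move=> a b c hab; split=> x y.
  by rewrite !mulA; apply: hab.
by move: (hab x (mul c y)); rewrite !mulA.
Qed.

End PrincipalCongruence.

Section Quotient.
Variables (S : Type) (R : S -> S -> Prop) (mul : S -> S -> S).
Hypothesis congR : is_congruence R mul.

Lemma qclass_eq a b : qclass R a = qclass R b <-> R a b.
Proof.
have [Rrefl [Rsym [Rtrans _]]] := congR.
split=> [/(f_equal (@proj1_sig _ _)) /= -> | hab]; first exact: Rrefl.
have Rab : R a = R b.
  apply: functional_extensionality => x; apply: propositional_extensionality.
  by split; [apply: Rtrans (Rsym _ _ hab) | apply: Rtrans hab].
rewrite /qclass; move: (ex_intro _ a _) (ex_intro _ b _); rewrite Rab => p1 p2.
by rewrite (proof_irrelevance _ p1 p2).
Qed.

Lemma qrepK (C : qtype R) : qclass R (qrep C) = C.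
Proof.
case: C => P hP; rewrite /qrep /=.
case: (constructive_indefinite_description _ hP) => a Ha /=; subst P.
by rewrite /qclass (proof_irrelevance _ hP (ex_intro _ a erefl)).
Qed.

Lemma qclassP (C : qtype R) : exists a, C = qclass R a.
Proof. by exists (qrep C); rewrite qrepK. Qed.

Lemma qopE a b : qop R mul (qclass R a) (qclass R b) = qclass R (mul a b).
Proof.
have [_ [Rsym [Rtrans Rmul]]] := congR.
have repR c : R (qrep (qclass R c)) c by apply/Rsym/qclass_eq; rewrite qrepK.
apply/qclass_eq; apply: Rtrans (Rmul _ _ _ (repR a)).2 _.
exact: (Rmul _ _ _ (repR b)).1.
Qed.

End Quotient.

Section ConditionStar.
Variables (S : Type) (mul : S -> S -> S) (e z : S) (H : S -> Prop).
Hypotheses (mulA : associative mul) (mulC : commutative mul).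
Hypotheses (mul1 : left_id e mul) (mul0 : left_zero z mul).
Hypotheses (Hz : H z) (H_ideal : forall x y, H y -> H (mul x y)).

Local Notation P := (PH mul H).
Local Notation "[ a ]" := (qclass P a).
Local Notation qmul := (qop P mul).

Lemma PH_comm a b : P a b <-> forall c, H (mul c a) <-> H (mul c b).
Proof.
have mul1r x : mul x e = x by rewrite mulC mul1.
have mulAC x y w : mul (mul x w) y = mul (mul x y) w.
  by rewrite -!mulA [mul w y]mulC.
split=> [hab c | hab x y]; first by have := hab c e; rewrite !mul1r.
by rewrite !(mulAC x y); apply: hab.
Qed.

Lemma PH_zero a : P a z <-> H a.
Proof.
rewrite PH_comm; split=> [/(_ e) | Ha c]; first by rewrite !mul1 => ->.
by split=> _; [rewrite mulC mul0 | apply: H_ideal].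
Qed.

Lemma annih_qclass a c : annih qmul [z] [a] [c] <-> H (mul c a).
Proof.
have congP := PH_congruence mulA H.
by rewrite /annih (qopE congP) (qclass_eq congP) PH_zero.
Qed.

Lemma cond_star_PH : cond_star qmul.
Proof.
have congP := PH_congruence mulA H.
have qE := qopE congP.
exists [e], [z].
split; [split; [|split; [|split]] | split].
- move=> x y w.
  have [a ->] := qclassP x; have [b ->] := qclassP y; have [c ->] := qclassP w.
  by rewrite !qE mulA.
- by move=> x y; have [a ->] := qclassP x; have [b ->] := qclassP y; rewrite !qE mulC.
- by move=> x; have [a ->] := qclassP x; rewrite !qE mul1 mulC mul1.
- by move=> x; have [a ->] := qclassP x; rewrite !qE mul0 mulC mul0.
- move=> s; have [a ->] := qclassP s => a_neq1 ann_zero.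
  have [c hc] : exists c, ~ (H (mul c a) <-> H (mul c e)).
    apply: NNPP => h; apply/a_neq1/(qclass_eq congP)/PH_comm => c.
    by apply: NNPP => hc; apply: h; exists c.
  have H_mul c' : H c' -> H (mul c' a) by rewrite mulC; apply: H_ideal.
  rewrite [mul c e]mulC mul1 in hc.
  have Hc : ~ H c by move=> Hc; apply: hc; split=> // _; apply: H_mul.
  have Hca : H (mul c a) by apply: NNPP => Hca; apply: hc; split=> [/Hca|/H_mul].
  by apply/Hc/PH_zero/(qclass_eq congP)/ann_zero/annih_qclass.
- move=> s t; have [a ->] := qclassP s; have [b ->] := qclassP t => h.
  apply/(qclass_eq congP)/PH_comm => c.
  by rewrite -!annih_qclass.
Qed.

End ConditionStar.

Section Divisibility.
Variable D : idomainType.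
Implicit Types a b c d g h k m p x y : D.

Lemma rdvd_refl x : rdvd x x. Proof. by exists 1; rewrite mul1r. Qed.

Lemma rdvd_trans x y w : rdvd x y -> rdvd y w -> rdvd x w.
Proof. by move=> [c ->] [d ->]; exists (d * c); ring. Qed.

Lemma rdvd_mull x y w : rdvd x y -> rdvd x (w * y).
Proof. by move=> [c ->]; exists (w * c); ring. Qed.

Lemma rdvd_mulr x y w : rdvd x y -> rdvd x (y * w).
Proof. by move=> [c ->]; exists (w * c); ring. Qed.

Lemma rdvd0 x : rdvd x 0. Proof. by exists 0; rewrite mul0r. Qed.

Lemma unit_rdvd u x : u \is a GRing.unit -> rdvd u x.
Proof. by move=> hu; exists (x / u); rewrite divrK. Qed.

Lemma rdvd_mul2l c x y : rdvd x y -> rdvd (c * x) (c * y).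
Proof. by move=> [k ->]; exists k; ring. Qed.

Lemma rdvd_mul2lI c x y : c != 0 -> rdvd (c * x) (c * y) -> rdvd x y.
Proof. by move=> c0 [k hk]; exists k; apply: (mulfI c0); rewrite hk; ring. Qed.

Lemma rdvd_prod (s : seq D) x : x \in s -> rdvd x (\prod_(y <- s) y).
Proof.
elim: s => [//|y s IH]; rewrite inE big_cons => /orP [/eqP ->|/IH].
  exact/rdvd_mulr/rdvd_refl.
exact: rdvd_mull.
Qed.

(* With m = k d and d | a, the cofactor k annihilates a modulo m. *)
Lemma rdvd_of_ann m a b d : m != 0 ->
  (forall c, rdvd m (c * a) -> rdvd m (c * b)) ->
  rdvd d a -> rdvd d m -> rdvd d b.
Proof.
move=> m0 ann_ab [a' ea] [k ek].
have k0 : k != 0 by apply: contraNneq m0 => k0; rewrite ek k0 mul0r.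
have : rdvd m (k * b) by apply: ann_ab; exists a'; rewrite ea ek; ring.
by rewrite {1}ek => /(rdvd_mul2lI k0).
Qed.

Lemma gcd_rdvd_of_ann m a b g h : m != 0 ->
  (forall c, rdvd m (c * a) -> rdvd m (c * b)) ->
  is_gcd g a m -> is_gcd h b m -> rdvd g h.
Proof.
move=> m0 ann_ab [ga [gm _]] [_ [_ h_gcd]].
exact: h_gcd (rdvd_of_ann m0 ann_ab ga gm) gm.
Qed.

End Divisibility.

Section UniqueFactorization.
Variable D : idomainType.
Hypothesis hD : is_UFD D.
Implicit Types a b c g m p q u x y z : D.

Definition irreducible_seq (s : seq D) : Prop :=
  forall x, x \in s -> irreducible_el x.

Lemma unit_mul_irreducible u p :
  u \is a GRing.unit -> irreducible_el p -> irreducible_el (u * p).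
Proof.
move=> uU [p0 [pNU p_irr]]; split.
  by rewrite mulf_neq0 //; apply: contraTneq uU => ->; rewrite unitr0.
split; first by rewrite unitrM negb_and pNU orbT.
move=> a b uab.
have : p = (u^-1 * a) * b by rewrite -mulrA -uab mulKr.
case/p_irr=> [u'aU|]; last by right.
by left; rewrite -[a](mulVKr uU) unitrM uU.
Qed.

Lemma irreducible_mul_factorization p z : irreducible_el p -> z != 0 ->
  exists q s, [/\ irreducible_seq (q :: s), z * p = \prod_(w <- q :: s) w & rdvd p q].
Proof.
move=> p_irr z0; have [zU|zNU] := boolP (z \is a GRing.unit).
  exists (z * p), [::]; split; last exact/rdvd_mull/rdvd_refl.
  - by move=> w; rewrite inE => /eqP ->; apply: unit_mul_irreducible.
  - by rewrite big_seq1.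
have [s [s_irr ->]] := hD.1 z z0 zNU.
exists p, s; split; last exact: rdvd_refl.
- by move=> w; rewrite inE => /orP [/eqP ->|/s_irr].
- by rewrite big_cons mulrC.
Qed.

Lemma factorization_head_rdvd q s t :
  irreducible_seq (q :: s) -> irreducible_seq t ->
  \prod_(w <- q :: s) w = \prod_(w <- t) w -> exists2 w, w \in t & rdvd q w.
Proof.
move=> qs_irr t_irr e_st; have [f [_ f_assoc]] := hD.2 _ _ qs_irr t_irr e_st.
have [q_w _] := f_assoc (@ord0 (size s)).
by exists (nth 0 t (f ord0)); first exact: mem_nth.
Qed.

Lemma irreducible_prime p x y :
  irreducible_el p -> rdvd p (x * y) -> rdvd p x \/ rdvd p y.
Proof.
move=> p_irr [z exy].
have [->|x0] := eqVneq x 0; first by left; apply: rdvd0.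
have [->|y0] := eqVneq y 0; first by right; apply: rdvd0.
have [xU|xNU] := boolP (x \is a GRing.unit).
  by right; exists (x^-1 * z); rewrite -mulrA -exy mulKr.
have [yU|yNU] := boolP (y \is a GRing.unit).
  by left; exists (y^-1 * z); rewrite -mulrA -exy [x * y]mulrC mulKr.
have z0 : z != 0.
  by apply: contraTneq (mulf_neq0 x0 y0) => z0; rewrite exy z0 mul0r negbK.
have [q [s [qs_irr ezp p_q]]] := irreducible_mul_factorization p_irr z0.
have [sx [sx_irr ex]] := hD.1 x x0 xNU.
have [sy [sy_irr ey]] := hD.1 y y0 yNU.
have sxy_irr : irreducible_seq (sx ++ sy).
  by move=> w; rewrite mem_cat => /orP [/sx_irr|/sy_irr].
have e_prod : \prod_(w <- q :: s) w = \prod_(w <- sx ++ sy) w.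
  by rewrite big_cat -ezp -exy -ex -ey.
have [w] := factorization_head_rdvd qs_irr sxy_irr e_prod.
rewrite mem_cat => /orP [] w_in q_w.
  by left; rewrite ex; apply: rdvd_trans p_q (rdvd_trans q_w (rdvd_prod w_in)).
by right; rewrite ey; apply: rdvd_trans p_q (rdvd_trans q_w (rdvd_prod w_in)).
Qed.

Lemma prod_irreducible_ann s a : irreducible_seq s ->
  exists g, [/\ rdvd g a, rdvd g (\prod_(x <- s) x) &
    forall c, rdvd (\prod_(x <- s) x) (c * a) -> rdvd (\prod_(x <- s) x) (c * g)].
Proof.
elim: s a => [|p s IH] a s_irr; rewrite ?big_nil ?big_cons.
  exists 1; split; first by exists a; rewrite mulr1.
    exact: rdvd_refl.
  by move=> c _; apply: unit_rdvd; rewrite unitr1.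
have p_irr : irreducible_el p by apply: s_irr; rewrite mem_head.
have s'_irr : irreducible_seq s by move=> x x_s; apply: s_irr; rewrite inE x_s orbT.
have p0 : p != 0 by case: p_irr.
have [[a' ea]|p_Na] := classic (rdvd p a).
  have [g [g_a' g_s ann_g]] := IH a' s'_irr.
  exists (p * g); split; first by rewrite ea [a' * p]mulrC; apply: rdvd_mul2l.
    exact: rdvd_mul2l.
  move=> c; rewrite ea [a' * p]mulrC mulrCA => /(rdvd_mul2lI p0).
  by move/ann_g; rewrite mulrCA; apply: rdvd_mul2l.
have [g [g_a g_s ann_g]] := IH a s'_irr.
exists g; split=> // [|c ann_a]; first exact: rdvd_mull.
have p_ca : rdvd p (c * a) := rdvd_trans (rdvd_mulr _ (rdvd_refl p)) ann_a.
have [[c' ec] | /p_Na []] := irreducible_prime p_irr p_ca.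
move: ann_a; rewrite ec -!mulrA !(mulrCA c').
by move=> /(rdvd_mul2lI p0) /ann_g /(rdvd_mul2l p).
Qed.

Lemma exists_gcd_ann m a : m != 0 ->
  exists g, is_gcd g a m /\ forall c, rdvd m (c * a) -> rdvd m (c * g).
Proof.
move=> m0.
have [g [g_a g_m ann_g]] : exists g, [/\ rdvd g a, rdvd g m &
    forall c, rdvd m (c * a) -> rdvd m (c * g)].
  have [mU|mNU] := boolP (m \is a GRing.unit).
    exists 1; split; first by exists a; rewrite mulr1.
      exact/unit_rdvd/unitr1.
    by move=> c _; apply: unit_rdvd.
  by have [s [s_irr ->]] := hD.1 m m0 mNU; apply: prod_irreducible_ann.
exists g; split=> //; split=> //; split=> // d d_a d_m.
exact: rdvd_of_ann m0 ann_g d_a d_m.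
Qed.

Lemma tau_ann m a b : m != 0 ->
  tau m a b <-> forall c, rdvd m (c * a) <-> rdvd m (c * b).
Proof.
move=> m0; split=> [tau_ab c | ann_ab g h g_gcd h_gcd].
  have [g [g_gcd ann_g]] := exists_gcd_ann a m0.
  have [h [h_gcd ann_h]] := exists_gcd_ann b m0.
  have [g_h h_g] := tau_ab g h g_gcd h_gcd.
  split=> [/ann_g | /ann_h] m_c; apply: rdvd_trans m_c (rdvd_mul2l c _).
    exact: rdvd_trans g_h h_gcd.1.
  exact: rdvd_trans h_g g_gcd.1.
split; [apply: gcd_rdvd_of_ann m0 _ g_gcd h_gcd | apply: gcd_rdvd_of_ann m0 _ h_gcd g_gcd].
  by move=> c; rewrite ann_ab.
by move=> c; rewrite ann_ab.
Qed.

End UniqueFactorization.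

Section PrincipalIdeal.
Variables (D : idomainType) (m : D).

Lemma J_rdvd x : J m x <-> rdvd m x.
Proof. by split=> -[c ->]; exists c; rewrite mulrC. Qed.

Lemma J0 : J m 0. Proof. by exists 0; rewrite mulr0. Qed.

Lemma J_ideal x y : J m y -> J m (x * y).
Proof. by move=> [c ->]; exists (x * c); rewrite mulrCA. Qed.

Lemma PH_J_ann a b :
  PH *%R (J m) a b <-> forall c, rdvd m (c * a) <-> rdvd m (c * b).
Proof.
rewrite (PH_comm _ (@mulrA D) (@mulrC D) (@mul1r D)).
by split=> ann_ab c; have := ann_ab c; rewrite !J_rdvd.
Qed.

End PrincipalIdeal.

Lemma tau_PH (D : idomainType) (hD : is_UFD D) (m : D) :
  m != 0 -> tau m = PH *%R (J m).
Proof.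
move=> m0; apply: functional_extensionality => a.
apply: functional_extensionality => b; apply: propositional_extensionality.
by rewrite tau_ann // PH_J_ann.
Qed.

Theorem theorem3 (D : idomainType) (hD : is_UFD D) (m : D) (hm : m != 0) :
  (forall a b : D, tau m a b <-> PH *%R (J m) a b) /\
  is_congruence (tau m) *%R /\
  cond_star (qop (tau m) *%R).
Proof.
rewrite (tau_PH hD hm); split=> //.
split; first exact: PH_congruence (@mulrA D) (J m).
exact: cond_star_PH (@mulrA D) (@mulrC D) (@mul1r D) (@mul0r D) (J0 m) (@J_ideal D m).
Qed.
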